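(* If $F \dashv G$ is a transparent Galois connection for $p$, then for every finite $L \subseteq \mathcal{L}$, $|C_{F\dashv G}(L)| \ge |k_p^*(C(L))|$.
   Context: $\mathcal{L}$ is a join semi-lattice with least element $\bot$ that also has greatest lower bounds (meets). Programs $p$ are partial functions from $\mathcal{P}(I \times \mathcal{L})$ to $\mathcal{P}(O \times \mathcal{L})$; $\mathcal{L}(x) = \{\ell \mid a^\ell \in x\}$ is the set of labels in $x$. For finite $S \subseteq \mathcal{L}$, $C(S) = \{\bigsqcup S' \mid S' \subseteq S\}$ is the closure set. A Galois connection $F \dashv G$ between $\mathcal{L}$ and a lattice $\mathcal{L}'$ is a pair $F : \mathcal{L} \to \mathcal{L}'$, $G : \mathcal{L}' \to \mathcal{L}$ with $F(\ell) \sqsubseteq \jmath \iff \ell \sqsubseteq G(\jmath)$. For a function $h$ and set $S$, $h^*(S) = \{h(s) \mid s \in S\}$, and $C_{F\dashv G}(S) = G^*(C(F^*(S)))$. $F \dashv G$ is transparent for $p$ if $\mathcal{L}(p(x)) \subseteq (G\circ F)^*(\mathcal{L})$ for all $x$. $k_p(\ell)$ is the greatest lower bound (meet) of $\{\jmath \mid \exists x.\ \jmath \in \mathcal{L}(p(x)) \wedge \ell \sqsubseteq \jmath\}$. *)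

From HB Require Import structures.
From mathcomp Require Import all_boot all_order.
From mathcomp Require Import finmap.
Set Implicit Arguments. Unset Strict Implicit. Unset Printing Implicit Defensive.
Import Order.Theory.
Local Open Scope order_scope.
Local Open Scope fset_scope.

Definition labels (A T : Type) (x : A * T -> Prop) : T -> Prop :=
  fun l => exists a, x (a, l).

Definition closureC d (T : bJoinSemilatticeType d) (S : {fset T}) : {fset T} :=
  [fset (\join_(x <- (S' : seq T)) x) | S' : {fset T} in fpowerset S].

Definition closureGC d (T : bJoinSemilatticeType d) d' (T' : bJoinSemilatticeType d')
  (F : T -> T') (G : T' -> T) (S : {fset T}) : {fset T} :=
  [fset G j | j in closureC [fset F l | l in S]].

Definition is_glb d (T : porderType d) (S : T -> Prop) (m : T) : Prop :=
  (forall s, S s -> m <= s) /\ (forall m', (forall s, S s -> m' <= s) -> m' <= m).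

Definition galois_connection d (T : porderType d) d' (T' : porderType d')
  (F : T -> T') (G : T' -> T) : Prop :=
  forall l j, (F l <= j) <-> (l <= G j).

(* Programs: partial functions P(I x L) -> P(O x L), as option-valued maps. *)
Definition program (I O T : Type) := (I * T -> Prop) -> option (O * T -> Prop).

(* Transparency: L(p x) \subseteq (G o F)^*(L) for every x (where p x is defined). *)
Definition transparent d (T : porderType d) d' (T' : porderType d')
  (I O : Type) (p : program I O T) (F : T -> T') (G : T' -> T) : Prop :=
  forall x y, p x = Some y -> forall l, labels y l -> exists l0, l = G (F l0).

Definition kp d (T : porderType d) (inf : (T -> Prop) -> T)
  (I O : Type) (p : program I O T) (l : T) : T :=
  inf (fun j => exists x y, p x = Some y /\ labels y j /\ l <= j).

From HB Require Import structures.
From mathcomp Require Import all_boot all_order.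
From mathcomp Require Import finmap.
Import Order.Theory.
Local Open Scope order_scope.
Local Open Scope fset_scope.

(* By transparency every label that p produces is closed, i.e. of the form
   G (F l0), and for a closed j we have l <= j iff G (F l) <= j; hence
   k_p l = k_p (G (F l)).  As a left adjoint F preserves joins, so G o F maps
   C(L) into C_{F -| G}(L).  Therefore k_p^*(C(L)) is contained in
   k_p^*(C_{F -| G}(L)), which has at most |C_{F -| G}(L)| elements. *)

Lemma le_anti_upper d (T : porderType d) (a b : T) :
  (forall z, (a <= z) = (b <= z)) -> a = b.
Proof. by move=> eq_up; apply/le_anti; rewrite eq_up lexx -eq_up lexx. Qed.

Lemma is_glb_ext d (T : porderType d) (S1 S2 : T -> Prop) (m1 m2 : T) :
  (forall s, S1 s <-> S2 s) -> is_glb S1 m1 -> is_glb S2 m2 -> m1 = m2.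
Proof.
move=> eqS [lb1 glb1] [lb2 glb2]; apply/le_anti/andP; split.
- by apply: glb2 => s /eqS /lb1.
- by apply: glb1 => s /eqS /lb2.
Qed.

Section GaloisConnection.

Context {d : Order.disp_t} {T : porderType d} {d' : Order.disp_t} {T' : porderType d'}.
Context {F : T -> T'} {G : T' -> T}.
Hypothesis FG : galois_connection F G.

Lemma gc_unit l : l <= G (F l).
Proof. exact/FG. Qed.

Lemma gc_counit j : F (G j) <= j.
Proof. exact/FG. Qed.

Lemma gc_le_closed l j : (l <= G j) = (G (F l) <= G j).
Proof.
apply/idP/idP => [le_l_Gj | ]; last exact: le_trans (gc_unit l).
by apply/FG; apply: le_trans (gc_counit (F l)) _; apply/FG.
Qed.

End GaloisConnection.

Lemma gc_join d (T : bJoinSemilatticeType d) d' (T' : bJoinSemilatticeType d')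
    (F : T -> T') (G : T' -> T) (s : seq T) :
  galois_connection F G -> F (\join_(x <- s) x) = \join_(x <- s) F x.
Proof.
move=> FG; apply: le_anti_upper => z.
apply/idP/idP => [/FG/joinsP_seq le_z | /joinsP_seq le_z].
- by apply/joinsP_seq => x xs _; apply/FG; apply: le_z.
- by apply/FG/joinsP_seq => x xs _; apply/FG; apply: le_z.
Qed.

Lemma join_imfset d (T : bJoinSemilatticeType d) d' (T' : bJoinSemilatticeType d')
    (F : T -> T') (S : {fset T}) :
  \join_(y <- (F @` S : seq T')) y = \join_(x <- (S : seq T)) F x.
Proof.
rewrite -[RHS](big_map F xpredT idfun); apply: eq_big_idem; first exact: joinxx.
by move=> y; apply/imfsetP/mapP => [] [x xS ->]; exists x.
Qed.

Lemma mem_closureC_imfset d (T : bJoinSemilatticeType d)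
    d' (T' : bJoinSemilatticeType d') (F : T -> T') (L : {fset T}) l :
  (forall s : seq T, F (\join_(x <- s) x) = \join_(x <- s) F x) ->
  l \in closureC L -> F l \in closureC (F @` L).
Proof.
move=> F_join /imfsetP [S /=]; rewrite fpowersetE => sub_SL ->.
apply/imfsetP; exists (F @` S); last by rewrite join_imfset F_join.
by rewrite /= fpowersetE; apply: subset_imfset; apply/fsubsetP.
Qed.

Lemma gc_mem_closureGC d (T : bJoinSemilatticeType d)
    d' (T' : bJoinSemilatticeType d') (F : T -> T') (G : T' -> T) (L : {fset T}) l :
  galois_connection F G -> l \in closureC L -> G (F l) \in closureGC F G L.
Proof.
move=> FG lL; apply: in_imfset => /=.
by apply: mem_closureC_imfset lL => s; apply: gc_join.
Qed.

Section LeastLabelAbove.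

Context {d : Order.disp_t} {T : porderType d} {inf : (T -> Prop) -> T}.
Hypothesis inf_glb : forall S, is_glb S (inf S).
Context {I O : Type} {p : program I O T}.

Lemma kp_ext l1 l2 :
  (forall x y j, p x = Some y -> labels y j -> (l1 <= j) = (l2 <= j)) ->
  kp inf p l1 = kp inf p l2.
Proof.
move=> eq_up; apply: is_glb_ext (inf_glb _) (inf_glb _) => j.
by split=> -[x [y [pxy [yj le_j]]]]; exists x, y; rewrite (eq_up x y j) in le_j *.
Qed.

Lemma kp_gc {d' : Order.disp_t} {T' : porderType d'} {F : T -> T'} {G : T' -> T} l :
  galois_connection F G -> transparent p F G -> kp inf p (G (F l)) = kp inf p l.
Proof.
move=> FG tr; apply: kp_ext => x y j pxy /(tr _ _ pxy) [l0 ->].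
by rewrite -(gc_le_closed FG).
Qed.

End LeastLabelAbove.

Theorem mainTheorem12
  (d : Order.disp_t) (T : bJoinSemilatticeType d)
  (inf : (T -> Prop) -> T) (inf_glb : forall S, is_glb S (inf S))
  (d' : Order.disp_t) (T' : bLatticeType d')
  (I O : Type) (p : program I O T)
  (F : T -> T') (G : T' -> T)
  (HGC : galois_connection F G)
  (Htr : transparent p F G)
  (L : {fset T}) :
  #|` closureGC F G L | >= #|` [fset kp inf p l | l in closureC L] |.
Proof.
have kp_sub : [fset kp inf p l | l in closureC L]
              `<=` [fset kp inf p j | j in closureGC F G L].
  apply/fsubsetP => _ /imfsetP [l /= lL ->].
  rewrite -(kp_gc inf_glb _ HGC Htr); apply: in_imfset.
  exact: gc_mem_closureGC.
exact: leq_trans (fsubset_leq_card kp_sub) (leq_imfset_card _ _ _).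
Qed.
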